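(* Let $d\ge 3$, $2\le k\le d$ and $n\ge d$. Then $\chi^{\mathsf{s}}_{d,k}(n)=n$.
   Context: A $k$-uniform hypergraph $H=(V,E)$ consists of a finite set $V$ and $E\subseteq\binom{V}{k}$. A (linear) embedding of $H$ into $\mathbb{R}^d$ is a map $\phi:V(H)\to\mathbb{R}^d$ with $\dim\operatorname{aff}\phi(e)=k-1$ for every edge $e$ and $\operatorname{conv}\phi(e_1)\cap\operatorname{conv}\phi(e_2)=\operatorname{conv}\phi(e_1\cap e_2)$ for all edges $e_1,e_2$. $\mathcal{E}_{d,k}$ is the set of $k$-uniform hypergraphs admitting such an embedding into $\mathbb{R}^d$. A strong $c$-coloring of $H$ is a map $\kappa:V(H)\to\{1,\dots,c\}$ with $|\kappa(e)|=k$ for every edge $e$; $\chi^{\mathsf{s}}(H)$ is the least such $c$. $\chi^{\mathsf{s}}_{d,k}(n)=\max\{\chi^{\mathsf{s}}(H): H\in\mathcal{E}_{d,k},\ |V(H)|=n\}$. *)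

From Stdlib Require Import Reals.
From mathcomp Require Import all_boot.

Set Implicit Arguments.
Unset Strict Implicit.
Unset Printing Implicit Defensive.

Definition in_conv (n d : nat) (phi : 'I_n -> 'I_d -> R) (S : {set 'I_n})
    (x : 'I_d -> R) : Prop :=
  exists lam : 'I_n -> R,
    (forall v, Rle R0 (lam v)) /\
    \big[Rplus/R0]_(v in S) lam v = R1 /\
    (forall i : 'I_d, \big[Rplus/R0]_(v in S) Rmult (lam v) (phi v i) = x i).

Definition aff_indep (n d : nat) (phi : 'I_n -> 'I_d -> R) (S : {set 'I_n}) : Prop :=
  forall mu : 'I_n -> R,
    \big[Rplus/R0]_(v in S) mu v = R0 ->
    (forall i : 'I_d, \big[Rplus/R0]_(v in S) Rmult (mu v) (phi v i) = R0) ->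
    forall v, v \in S -> mu v = R0.

Definition k_uniform (n k : nat) (E : {set {set 'I_n}}) : Prop :=
  forall e, e \in E -> #|e| = k.

Definition is_embedding (n d : nat) (E : {set {set 'I_n}})
    (phi : 'I_n -> 'I_d -> R) : Prop :=
  (forall e, e \in E -> aff_indep phi e) /\
  (forall e1 e2, e1 \in E -> e2 \in E -> forall x : 'I_d -> R,
     (in_conv phi e1 x /\ in_conv phi e2 x) <-> in_conv phi (e1 :&: e2) x).

Definition in_Edk (d k n : nat) (E : {set {set 'I_n}}) : Prop :=
  k_uniform k E /\ exists phi : 'I_n -> 'I_d -> R, is_embedding E phi.

Definition strong_colorable (n : nat) (E : {set {set 'I_n}}) (c : nat) : bool :=
  [exists kappa : {ffun 'I_n -> 'I_c}, [forall e in E, #|kappa @: e| == #|e|]].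

Lemma strong_colorable_n (n : nat) (E : {set {set 'I_n}}) :
  exists c, strong_colorable E c.
Proof.
exists n; apply/existsP; exists [ffun v => v]; apply/forallP => e; apply/implyP => _.
apply/eqP; rewrite (@eq_imset _ _ _ (fun v => v)); last by move=> v; rewrite ffunE.
by rewrite imset_id.
Qed.

Definition chi_s (n : nat) (E : {set {set 'I_n}}) : nat :=
  ex_minn (strong_colorable_n E).

From Stdlib Require Import Reals.
From mathcomp Require Import all_boot all_order all_algebra.
From mathcomp Require Import Rstruct zify lra.
Import Order.TTheory GRing.Theory Num.Theory.

(* Coloring every
   vertex differently is strong, so chi^s <= n.  Conversely we build a
   k-uniform hypergraph on n vertices in which every two vertices share an
   edge (so strong colorings are injective) and embed it on the moment curve
   v |-> (v, v^2, ..., v^d).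
   Geometry: a polynomial of degree <= d is an affine function of the moment
   coordinates; hence d + 1 moment points are affinely independent, and
   conv e1 meets conv e2 only in conv (e1 :&: e2) when some such polynomial
   vanishes on e1 and is positive on e2 :\: e1.  This holds for all pairs of
   edges once each edge is "moment-separable": some polynomial vanishes on it
   and is positive outside it above its minimum.
   Combinatorics: the edge through x < y is {x, y} for k = 2, separated by
   (X - x)(X - y)^2 as d >= 3; for k >= 3 it is a minimum followed by pairs of
   consecutive vertices and possibly n - 1, separated by Gale's evenness. *)

Set Implicit Arguments.
Unset Strict Implicit.
Unset Printing Implicit Defensive.

Local Open Scope ring_scope.

Definition moment_curve (n d : nat) : 'I_n -> 'I_d -> R :=
  fun v i => (val v)%:R ^+ i.+1.

Lemma RplusE (n : nat) (S : {set 'I_n}) (F : 'I_n -> R) :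
  \big[Rplus/R0]_(v in S) F v = \sum_(v in S) F v.
Proof. by []. Qed.

Lemma in_convE (n d : nat) (phi : 'I_n -> 'I_d -> R) (S : {set 'I_n}) x :
  in_conv phi S x <->
  exists lam : 'I_n -> R,
    [/\ forall v, 0 <= lam v, \sum_(v in S) lam v = 1
      & forall i, \sum_(v in S) lam v * phi v i = x i].
Proof.
split=> [[lam [l0 [l1 lx]]] | [lam [l0 l1 lx]]]; exists lam.
  by split=> // v; apply/RleP.
by split=> [v|]; [apply/RleP | split].
Qed.

Lemma sum_horner_moment (n d : nat) (S : {set 'I_n}) (lam : 'I_n -> R)
    (q : {poly R}) : (size q <= d.+1)%N ->
  \sum_(v in S) lam v * q.[(val v)%:R] =
  q`_0 * \sum_(v in S) lam v +
  \sum_(i < d) q`_i.+1 * \sum_(v in S) lam v * moment_curve v i.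
Proof.
move=> size_q.
under eq_bigr => v _ do rewrite (horner_coef_wide _ size_q) mulr_sumr.
rewrite exchange_big big_ord_recl /=; congr (_ + _).
  by rewrite mulr_sumr; apply: eq_bigr => v _; rewrite expr0 mulr1 mulrC.
apply: eq_bigr => i _; rewrite mulr_sumr; apply: eq_bigr => v _.
by rewrite /moment_curve mulrCA.
Qed.

(* Any d + 1 points of the moment curve are affinely independent: the         *)
(* polynomial vanishing on all of them but w detects the coefficient of w.    *)
Lemma aff_indep_moment (n d : nat) (e : {set 'I_n}) :
  (#|e| <= d.+1)%N -> aff_indep (@moment_curve n d) e.
Proof.
move=> card_e mu mu_sum mu_mom w we.
pose q : {poly R} := \prod_(u <- enum (e :\ w)) ('X - ((val u)%:R)%:P).
have size_q : (size q <= d.+1)%N.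
  by rewrite size_prod_XsubC -cardE; move: card_e; rewrite (cardsD1 w e) we.
have q_root v : v \in e :\ w -> q.[(val v)%:R] = 0.
  move=> vew; rewrite horner_prod (bigD1_seq v) ?enum_uniq ?mem_enum //=.
  by rewrite !hornerE subrr mul0r.
have q_w : q.[(val w)%:R] != 0.
  rewrite horner_prod prodf_seq_neq0; apply/allP => u; rewrite mem_enum !inE.
  by case/andP=> uw _; rewrite !hornerE subr_eq0 eqr_nat eq_sym val_eqE.
have mom0 : \sum_(i < d) q`_i.+1 * \sum_(v in e) mu v * moment_curve v i = 0.
  by apply: big1 => i _; rewrite (mu_mom i) mulr0.
have := sum_horner_moment e mu size_q.
rewrite RplusE in mu_sum; rewrite mu_sum mulr0 add0r mom0.
rewrite (bigD1 w we) /= big1 ?addr0; last first.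
  by move=> v /andP [ve vw]; rewrite q_root ?mulr0 // !inE vw.
by move/eqP; rewrite mulf_eq0 (negbTE q_w) orbF => /eqP.
Qed.

Lemma sum_vanishing_outside (n : nat) (A B : {set 'I_n}) (F : 'I_n -> R) :
  (forall v, v \in A -> v \notin B -> F v = 0) ->
  \sum_(v in A) F v = \sum_(v in B :&: A) F v.
Proof.
move=> F0; rewrite big_mkcond [RHS]big_mkcond; apply: eq_bigr => v _.
by rewrite inE; case vA: (v \in A); case vB: (v \in B) => //=; rewrite F0 ?vB.
Qed.

Lemma in_conv_subset (n d : nat) (phi : 'I_n -> 'I_d -> R) (A B : {set 'I_n}) x :
  A \subset B -> in_conv phi A x -> in_conv phi B x.
Proof.
move=> sAB /in_convE [lam [l0 l1 lx]]; apply/in_convE.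
have AB_inter : A :&: B = A by apply/setIidPl.
exists (fun v => if v \in A then lam v else 0); split.
- by move=> v; case: (v \in A).
- rewrite (sum_vanishing_outside (B := A)) => [|v _ /negbTE -> //].
  by rewrite AB_inter -l1; apply: eq_bigr => v ->.
- move=> i; rewrite (sum_vanishing_outside (B := A)) => [|v _ /negbTE ->];
    last exact: mul0r.
  by rewrite AB_inter -lx; apply: eq_bigr => v ->.
Qed.

(* Separation: if a polynomial of degree <= d vanishes on e1 and is positive *)
(* on e2 :\: e1, a common point of the hulls of e1 and e2 is a convex        *)
(* combination of e1 :&: e2: integrating q against the weights of x shows    *)
(* that the weights of e2 vanish outside e1.                                 *)
Lemma moment_separation (n d : nat) (e1 e2 : {set 'I_n}) (q : {poly R}) x :
  (size q <= d.+1)%N ->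
  (forall u, u \in e1 -> q.[(val u)%:R] = 0) ->
  (forall v, v \in e2 -> v \notin e1 -> 0 < q.[(val v)%:R]) ->
  in_conv (@moment_curve n d) e1 x -> in_conv (@moment_curve n d) e2 x ->
  in_conv (@moment_curve n d) (e1 :&: e2) x.
Proof.
move=> size_q q_e1 q_e2 /in_convE [lam [_ l1 lx]] /in_convE [mu [m0 m1 mx]].
have int_q : \sum_(v in e2) mu v * q.[(val v)%:R] = 0.
  rewrite (sum_horner_moment _ _ size_q) m1.
  under eq_bigr => i _ do rewrite mx -lx.
  rewrite -l1 -(sum_horner_moment _ _ size_q).
  by apply: big1 => v ve; rewrite q_e1 ?mulr0.
have mu_q0 v : v \in e2 -> mu v * q.[(val v)%:R] = 0.
  apply: (psumr_eq0P _ int_q) => u ue; case ue1: (u \in e1).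
    by rewrite q_e1 ?mulr0.
  by rewrite mulr_ge0 // ltW // q_e2 ?ue1.
have mu0 v : v \in e2 -> v \notin e1 -> mu v = 0.
  move=> ve vn; move/eqP: (mu_q0 v ve); rewrite mulf_eq0 => /orP [/eqP //|].
  by rewrite gt_eqF ?q_e2.
apply/in_convE; exists mu; split => //.
- by rewrite -m1 [RHS](sum_vanishing_outside (B := e1)).
- move=> i; rewrite -(mx i) [RHS](sum_vanishing_outside (B := e1)) // => v ve vn.
  by rewrite mu0 ?mul0r.
Qed.

Definition moment_separable (n d : nat) (e : {set 'I_n}) : Prop :=
  exists (a : nat) (q : {poly R}),
  [/\ forall u, u \in e -> (a <= u)%N, (size q <= d.+1)%N,
      forall u, u \in e -> q.[(val u)%:R] = 0
    & forall v : 'I_n, v \notin e -> (a <= v)%N -> 0 < q.[(val v)%:R]].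

(* A hypergraph whose edges have at most d + 1 vertices and are all          *)
(* moment-separable is embedded by the moment curve: for two edges, the      *)
(* polynomial of the one with the smaller lower bound separates it from the  *)
(* other.                                                                    *)
Lemma moment_embedding (n d : nat) (E : {set {set 'I_n}}) :
  (forall e, e \in E -> #|e| <= d.+1)%N ->
  (forall e, e \in E -> moment_separable d e) ->
  is_embedding E (@moment_curve n d).
Proof.
move=> card_E sep_E; split=> [e eE|e1 e2 e1E e2E x].
  exact/aff_indep_moment/card_E.
split=> [[x1 x2] | x12]; last first.
  by split; apply: in_conv_subset x12; [exact: subsetIl | exact: subsetIr].
have [a1 [q1 [a1_low size_q1 q1_e1 q1_pos]]] := sep_E e1 e1E.
have [a2 [q2 [a2_low size_q2 q2_e2 q2_pos]]] := sep_E e2 e2E.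
have [a12 | a21] := leqP a1 a2.
  apply: (moment_separation size_q1 q1_e1) x1 x2 => v ve2 vne1.
  by apply: q1_pos vne1 _; apply: leq_trans a12 (a2_low v ve2).
rewrite setIC; apply: (moment_separation size_q2 q2_e2) x2 x1 => v ve1 vne2.
by apply: q2_pos vne2 _; apply: leq_trans (ltnW a21) (a1_low v ve1).
Qed.

(* Gale's evenness argument: a vertex v outside a run of consecutive pairs   *)
(* of roots m, m+1, ..., m+2j-1 sees a positive product of the v - r.        *)
Lemma prod_pairs_gt0 (v m j : nat) : ((v < m) || (m + j.*2 <= v))%N ->
  0 < \prod_(r <- iota m j.*2) ((v%:R : R) - r%:R).
Proof.
elim: j m => [|j IH] m v_out; first by rewrite big_nil.
rewrite doubleS /= !big_cons mulrA mulr_gt0 ?IH //; last first.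
  by move: v_out; rewrite doubleS; lia.
case/orP: v_out => [v_lt | v_ge].
  have below_m : (v%:R : R) - m%:R < 0 by rewrite subr_lt0 ltr_nat.
  have below_m1 : (v%:R : R) - m.+1%:R < 0 by rewrite subr_lt0 ltr_nat; lia.
  nra.
have above_m : 0 < (v%:R : R) - m%:R by rewrite subr_gt0 ltr_nat; lia.
have above_m1 : 0 < (v%:R : R) - m.+1%:R by rewrite subr_gt0 ltr_nat; lia.
nra.
Qed.

Definition gale_tail (n h m : nat) : seq nat :=
  iota m h./2.*2 ++ nseq (odd h) n.-1.

Lemma gale_tail_sign (n h m v : nat) : (v < n)%N -> v \notin gale_tail n h m ->
  0 < (-1) ^+ odd h * \prod_(r <- gale_tail n h m) ((v%:R : R) - r%:R).
Proof.
rewrite /gale_tail big_cat mem_cat negb_or => vn /andP [v_pairs v_last].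
have pairs_pos : 0 < \prod_(r <- iota m h./2.*2) ((v%:R : R) - r%:R).
  by apply: prod_pairs_gt0; move: v_pairs; rewrite mem_iota; lia.
case: (odd h) v_last => /= v_last; last by rewrite big_nil mulr1 mul1r.
rewrite big_cons big_nil mulr1 expr1 mulN1r -mulrN mulr_gt0 // oppr_gt0.
by rewrite subr_lt0 ltr_nat; move: v_last; rewrite inE; lia.
Qed.

Lemma gale_tail_props (n h m : nat) : (m + h <= n)%N ->
  [/\ size (gale_tail n h m) = h, uniq (gale_tail n h m),
      all (fun u => u < n)%N (gale_tail n h m)
    & forall u, u \in gale_tail n h m -> (m <= u)%N].
Proof.
move=> mhn; have h_split := odd_double_half h.
rewrite /gale_tail size_cat size_iota size_nseq cat_uniq iota_uniq all_cat.
split.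
- lia.
- case: (odd h) h_split => /= h_split; rewrite ?andbT // mem_iota; lia.
- apply/andP; split; apply/allP => u; rewrite ?mem_iota ?mem_nseq; lia.
- by move=> u; rewrite mem_cat mem_iota mem_nseq; lia.
Qed.

Lemma gale_tail_cover (n h u : nat) : (n - h <= u < n)%N ->
  u \in gale_tail n h (n - h).
Proof.
move=> u_range; have h_split := odd_double_half h.
rewrite /gale_tail mem_cat mem_iota mem_nseq; lia.
Qed.

Lemma gale_tail_head (n h m : nat) : (2 <= h)%N -> m \in gale_tail n h m.
Proof.
move=> h2; have h_split := odd_double_half h.
rewrite /gale_tail mem_cat mem_iota; lia.
Qed.

Definition gale_edge_seq (n k x y : nat) : seq nat :=
  minn x (n - k) :: gale_tail n k.-1 (minn y (n - k).+1).

Lemma gale_edge_seq_props (n k x y : nat) : (3 <= k <= n)%N -> (x < y < n)%N ->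
  [/\ size (gale_edge_seq n k x y) = k, uniq (gale_edge_seq n k x y),
      all (fun u => u < n)%N (gale_edge_seq n k x y),
      x \in gale_edge_seq n k x y & y \in gale_edge_seq n k x y] /\
  (forall u, u \in gale_edge_seq n k x y -> minn x (n - k) <= u)%N.
Proof.
move=> k_range xy_range; set m := minn y (n - k).+1.
have [t_size t_uniq t_all t_low] := @gale_tail_props n k.-1 m (ltac:(lia)).
have m_top : (n - k < y)%N -> m = (n - k.-1)%N by rewrite /m; lia.
rewrite /gale_edge_seq -/m /= in_cons in_cons t_size t_uniq t_all andbT.
split; last by move=> u; rewrite in_cons => /orP [/eqP -> | /t_low]; lia.
split.
- lia.
- by apply/negP => /t_low; lia.
- lia.
- case: (leqP x (n - k)) => hx; first by apply/orP; left; apply/eqP; lia.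
  by rewrite m_top ?gale_tail_cover ?orbT; lia.
- case: (leqP y (n - k)) => hy.
    by rewrite /m (_ : minn y (n - k).+1 = y) ?gale_tail_head ?orbT; lia.
  by rewrite m_top ?gale_tail_cover ?orbT; lia.
Qed.

Lemma gale_edge_sign (n k x y v : nat) : (v < n)%N ->
  v \notin gale_edge_seq n k x y -> (minn x (n - k) < v)%N ->
  0 < (-1) ^+ odd k.-1 * \prod_(r <- gale_edge_seq n k x y) ((v%:R : R) - r%:R).
Proof.
rewrite /gale_edge_seq in_cons negb_or big_cons mulrCA => vn /andP [_ v_tail] av.
by rewrite mulr_gt0 ?gale_tail_sign // subr_gt0 ltr_nat.
Qed.

Definition seq_edge (n : nat) (s : seq nat) : {set 'I_n} :=
  [set v : 'I_n | val v \in s].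

Lemma card_seq_edge (n : nat) (s : seq nat) :
  uniq s -> all (fun u => u < n)%N s -> #|seq_edge n s| = size s.
Proof.
elim: s => [|u s IH] /=.
  by move=> _ _; apply/eqP; rewrite cards_eq0; apply/eqP/setP => v; rewrite !inE.
case/andP=> u_s s_uniq /andP [un s_all].
have -> : seq_edge n (u :: s) = Ordinal un |: seq_edge n s.
  by apply/setP => v; rewrite !inE -val_eqE.
by rewrite cardsU1 IH // inE /= u_s.
Qed.

Lemma seq_edge_separable (n d a : nat) (s rs : seq nat) (c : R) :
  (size rs <= d)%N -> {subset s <= rs} -> (forall u, u \in s -> a <= u)%N ->
  (forall v, (v < n)%N -> v \notin s -> (a <= v)%N ->
     0 < c * \prod_(r <- rs) ((v%:R : R) - r%:R)) ->
  moment_separable d (seq_edge n s).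
Proof.
move=> size_rs s_rs a_low pos.
pose q : {poly R} := c *: \prod_(r <- rs) ('X - (r%:R)%:P).
have qE (t : R) : q.[t] = c * \prod_(r <- rs) (t - r%:R).
  by rewrite hornerZ horner_prod; under eq_bigr do rewrite !hornerE.
exists a, q; split.
- by move=> u; rewrite inE => /a_low.
- by rewrite (leq_trans (size_scale_leq _ _)) // size_prod_XsubC ltnS.
- by move=> u; rewrite inE qE => /s_rs u_rs; rewrite (big_rem _ u_rs) /= subrr
    mul0r mulr0.
- by move=> v; rewrite inE qE; apply: pos; apply: ltn_ord.
Qed.

Definition pair_seq (n k x y : nat) : seq nat :=
  if k == 2%N then [:: x; y] else gale_edge_seq n k x y.

Definition pair_edge (n k : nat) (x y : 'I_n) : {set 'I_n} :=
  seq_edge n (pair_seq n k x y).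

(* For k = 2 the edge {x, y} is separated by (X - x)(X - y)^2, of degree 3.  *)
Lemma pair_edge2_separable (d n : nat) (x y : 'I_n) : (3 <= d)%N -> (x < y)%N ->
  moment_separable d (pair_edge 2%N x y).
Proof.
move=> d3 xy; rewrite /pair_edge /pair_seq /=.
apply: (seq_edge_separable (a := x) (rs := [:: x : nat; y : nat; y : nat])
  (c := 1%R)) => //.
- by move=> u; rewrite !inE => /orP [] ->; rewrite ?orbT.
- by move=> u; rewrite !inE => /orP [] /eqP ->; lia.
move=> v _; rewrite !inE negb_or => /andP [vx vy] xv.
rewrite mul1r !big_cons big_nil mulr1 mulr_gt0 //.
  by rewrite subr_gt0 ltr_nat; lia.
by rewrite -expr2 exprn_even_gt0 //= subr_eq0 eqr_nat.
Qed.

Lemma pair_edge_gale_separable (d k n : nat) (x y : 'I_n) :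
  (3 <= k <= d)%N -> (d <= n)%N -> (x < y)%N ->
  moment_separable d (pair_edge k x y).
Proof.
move=> k_range dn xy; have k_ne2 : k != 2%N by lia.
have xy_range : (x < y < n)%N by rewrite xy ltn_ord.
have [[s_size _ _ _ _] s_low] :=
  @gale_edge_seq_props n k x y (ltac:(lia)) xy_range.
rewrite /pair_edge /pair_seq (negbTE k_ne2).
apply: (seq_edge_separable (a := minn x (n - k)) (rs := gale_edge_seq n k x y)
  (c := (-1) ^+ odd k.-1)) => //.
  by rewrite s_size; lia.
move=> v vn v_out av; apply: gale_edge_sign => //.
rewrite ltn_neqAle av andbT; apply/negP => /eqP va.
by move: v_out; rewrite -va /gale_edge_seq in_cons eqxx.
Qed.

Lemma pair_edge_props (d k n : nat) (x y : 'I_n) :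
  (3 <= d)%N -> (2 <= k <= d)%N -> (d <= n)%N -> (x < y)%N ->
  [/\ #|pair_edge k x y| = k, x \in pair_edge k x y,
      y \in pair_edge k x y & moment_separable d (pair_edge k x y)].
Proof.
move=> d3 k_range dn xy.
have [k2 | k_ne2] := eqVneq k 2%N.
  rewrite k2; split; last exact: pair_edge2_separable.
  all: rewrite /pair_edge /pair_seq /=.
  - by rewrite card_seq_edge //= ?inE ?ltn_ord ?andbT; lia.
  - by rewrite !inE eqxx.
  - by rewrite !inE eqxx orbT.
have xy_range : (x < y < n)%N by rewrite xy ltn_ord.
have [[s_size s_uniq s_all x_in y_in] _] :=
  @gale_edge_seq_props n k x y (ltac:(lia)) xy_range.
split; last by apply: pair_edge_gale_separable => //; lia.
all: by rewrite /pair_edge /pair_seq (negbTE k_ne2) ?card_seq_edge ?inE.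
Qed.

Definition pair_family (n k : nat) : {set {set 'I_n}} :=
  [set e | [exists x : 'I_n, exists y : 'I_n,
              (x < y)%N && (e == pair_edge k x y)]].

Lemma pair_familyP (n k : nat) (e : {set 'I_n}) :
  e \in pair_family n k -> exists x y : 'I_n, (x < y)%N /\ e = pair_edge k x y.
Proof.
by rewrite inE => /existsP [x /existsP [y /andP [xy /eqP ->]]]; exists x, y.
Qed.

Lemma pair_family_in_Edk (d k n : nat) :
  (3 <= d)%N -> (2 <= k <= d)%N -> (d <= n)%N -> in_Edk d k (pair_family n k).
Proof.
move=> d3 k_range dn; split.
  move=> e /pair_familyP [x [y [xy ->]]].
  by have [] := pair_edge_props d3 k_range dn xy.
exists (@moment_curve n d).
apply: moment_embedding => e /pair_familyP [x [y [xy ->]]];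
  have [card_e _ _ sep_e] := pair_edge_props d3 k_range dn xy => //.
by rewrite card_e; lia.
Qed.

Lemma pair_family_covers (d k n : nat) :
  (3 <= d)%N -> (2 <= k <= d)%N -> (d <= n)%N ->
  forall x y : 'I_n, x != y ->
  exists2 e, e \in pair_family n k & (x \in e) && (y \in e).
Proof.
move=> d3 k_range dn.
suff lt_cover (x y : 'I_n) : (x < y)%N ->
    exists2 e, e \in pair_family n k & (x \in e) && (y \in e).
  move=> x y; rewrite neq_ltn => /orP [/lt_cover // | /lt_cover [e eE]].
  by rewrite andbC; exists e.
move=> xy; have [_ x_in y_in _] := pair_edge_props d3 k_range dn xy.
exists (pair_edge k x y); last by rewrite x_in y_in.
rewrite inE; apply/existsP; exists x; apply/existsP; exists y.
by rewrite xy eqxx.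
Qed.

Lemma chi_s_le (n : nat) (E : {set {set 'I_n}}) (c : nat) :
  strong_colorable E c -> (chi_s E <= c)%N.
Proof. by rewrite /chi_s; case: ex_minnP => m _; apply. Qed.

Lemma chi_s_colorable (n : nat) (E : {set {set 'I_n}}) :
  strong_colorable E (chi_s E).
Proof. by rewrite /chi_s; case: ex_minnP. Qed.

Lemma strong_colorable_id (n : nat) (E : {set {set 'I_n}}) :
  strong_colorable E n.
Proof.
apply/existsP; exists [ffun v => v]; apply/forallP => e; apply/implyP => _.
rewrite (@eq_imset _ _ _ id) ?imset_id // => v.
by rewrite ffunE.
Qed.

(* If every two distinct vertices lie in a common edge, a strong coloring is *)
(* injective, hence uses at least n colors.                                  *)
Lemma strong_colorable_covering (n c : nat) (E : {set {set 'I_n}}) :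
  (forall x y : 'I_n, x != y -> exists2 e, e \in E & (x \in e) && (y \in e)) ->
  strong_colorable E c -> (n <= c)%N.
Proof.
move=> cover /existsP [kappa /forallP rainbow].
have kappa_inj : injective kappa.
  move=> x y kxy; have [// | /cover [e eE /andP [xe ye]]] := eqVneq x y.
  have /imset_injP kappa_inj_e := implyP (rainbow e) eE.
  exact: kappa_inj_e.
by have := leq_card _ kappa_inj; rewrite !card_ord.
Qed.

Unset Implicit Arguments.
Local Close Scope ring_scope.

Theorem mainTheorem12 (d k n : nat) (hd : 3 <= d) (hk2 : 2 <= k) (hkd : k <= d)
    (hn : d <= n) :
  (exists E : {set {set 'I_n}}, in_Edk d k E /\ chi_s E = n) /\
  (forall E : {set {set 'I_n}}, in_Edk d k E -> chi_s E <= n).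
Proof.
have k_range : (2 <= k <= d)%N by rewrite hk2 hkd.
split; last by move=> E _; apply/chi_s_le/strong_colorable_id.
exists (pair_family n k); split; first exact: pair_family_in_Edk.
apply/eqP; rewrite eqn_leq chi_s_le ?strong_colorable_id //=.
exact: strong_colorable_covering (pair_family_covers hd k_range hn)
  (chi_s_colorable _).
Qed.
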